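(* Let $l\geq 1$ and let $\rho_{A_{1}A_{1}'\cdots A_{l}A_{l}'}$ be a density operator on a finite-dimensional tensor-product Hilbert space $\mathcal{H}_{A_1}\otimes\mathcal{H}_{A_1'}\otimes\cdots\otimes\mathcal{H}_{A_l}\otimes\mathcal{H}_{A_l'}$. Then \[ I(A_{1}A_{1}':\cdots:A_{l}A_{l}')_{\rho}-I(A_{1}':\cdots:A_{l}')_{\rho}=\sum_{i=1}^{l}I\big(A_{i};A_{1}^{i-1}A'_{[l]\setminus\{i\}}\,\big|\,A_{i}'\big)_{\rho}, \] where $A_{1}^{i-1}$ denotes the systems $A_{1}\cdots A_{i-1}$ (empty if $i=1$) and $A'_{[l]\setminus\{i\}}$ denotes all of the systems $A_1',\dots,A_l'$ except $A_i'$. Moreover, the expansion may proceed in any order: for every permutation $\pi$ of $\{1,\dots,l\}$, \[ I(A_{1}A_{1}':\cdots:A_{l}A_{l}')_{\rho}-I(A_{1}':\cdots:A_{l}')_{\rho}=\sum_{i=1}^{l}I\big(A_{\pi(i)};A_{\pi(1)}\cdots A_{\pi(i-1)}A'_{[l]\setminus\{\pi(i)\}}\,\big|\,A_{\pi(i)}'\big)_{\rho}. \]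
   Context: All entropies use the natural logarithm. For a state $\sigma$ on system $S$, $H(S)_\sigma=-\operatorname{Tr}\{\sigma\log\sigma\}$; marginal entropies are computed from reduced density operators. The multipartite information of a state on systems $B_1,\dots,B_m$ is $I(B_1:\cdots:B_m)=\sum_{j=1}^m H(B_j)-H(B_1\cdots B_m)$. The conditional quantum mutual information is $I(A;B|C)=H(AC)+H(BC)-H(C)-H(ABC)$. *)

From HB Require Import structures.
From mathcomp Require Import all_boot all_order all_algebra.
From mathcomp Require Import reals exp.
From mathcomp Require Import complex.
Set Implicit Arguments. Unset Strict Implicit. Unset Printing Implicit Defensive.
Import Order.TTheory GRing.Theory Num.Theory.
Local Open Scope ring_scope.

Section QInfo.
Variable R : realType.
Local Notation C := R[i].

(* Finitely many subsystems indexed by a finType K, subsystem k has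
   Hilbert space C^(d k); the computational basis of the joint space is
   indexed by configurations (one basis index per subsystem). *)
Variables (K : finType) (d : K -> nat).

Definition cfg := {dffun forall k : K, 'I_(d k)}.

Definition subsys (S : {set K}) := {k : K | k \in S}.
Definition cfgS (S : {set K}) := {dffun forall k : subsys S, 'I_(d (val k))}.

Definition restr (S : {set K}) (u : cfg) : cfgS S :=
  [ffun k : subsys S => u (val k)].

(* An operator on the joint space, as its kernel in the product basis. *)
Definition op := cfg -> cfg -> C.

Definition density (rho : op) : Prop :=
  [/\ (forall x y, rho x y = (rho y x)^*),
      (forall v : cfg -> C, 0 <= \sum_x \sum_y (v x)^* * rho x y * v y)
    & \sum_x rho x x = 1].

(* reduced density operator (partial trace over the complement of S) *)
Definition ptrace (S : {set K}) (rho : op) (x y : cfgS S) : C :=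
  \sum_(u : cfg) \sum_(v : cfg)
     (if [&& restr S u == x, restr S v == y & [forall k in ~: S, u k == v k]]
      then rho u v else 0).

Definition mx_of (T : finType) (f : T -> T -> C) : 'M[C]_#|T| :=
  \matrix_(i, j) f (enum_val i) (enum_val j).

End QInfo.

Section Entropy.
Variable R : realType.
Local Notation C := R[i].

(* eigenvalues of a square complex matrix, with multiplicity:
   the roots of its characteristic polynomial *)
Definition spectrum n (A : 'M[C]_n) : seq C :=
  sval (closed_field_poly_normal (char_poly A)).

Definition xlnx (x : R) : R := if x == 0 then 0 else x * ln x.

(* von Neumann entropy H(sigma) = - Tr sigma log sigma
   = - sum over eigenvalues lambda (with multiplicity) of lambda ln lambda;
   eigenvalues of a density operator are real, so we take real parts. *)
Definition vN_entropy n (A : 'M[C]_n) : R :=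
  - \sum_(z <- spectrum A) xlnx (complex.Re z).

Variables (K : finType) (d : K -> nat).

Definition Hs (rho : op R d) (S : {set K}) : R :=
  vN_entropy (mx_of (ptrace rho (S := S))).

Definition multi_info (rho : op R d) m (B : 'I_m -> {set K}) : R :=
  \sum_(j < m) Hs rho (B j) - Hs rho (\bigcup_(j < m) B j).

Definition cmi (rho : op R d) (A B Cs : {set K}) : R :=
  Hs rho (A :|: Cs) + Hs rho (B :|: Cs) - Hs rho Cs - Hs rho (A :|: B :|: Cs).

End Entropy.

Definition sysA l (i : 'I_l) : 'I_l * bool := (i, false).
Definition sysA' l (i : 'I_l) : 'I_l * bool := (i, true).

(* Write W_k for the systems A'_1 ... A'_l together with the first k systems
   A_{pi 1} ... A_{pi k}.  The i-th conditional mutual information on the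
   right-hand side is (H(A_{pi i} A'_{pi i}) - H(A'_{pi i})) + H(W_{i-1}) - H(W_i),
   so the sum telescopes to sum_j (H(A_j A'_j) - H(A'_j)) + H(W_0) - H(W_l),
   which is the difference of the two multipartite informations since
   W_0 = A'_1 ... A'_l and W_l is the whole system. *)
From HB Require Import structures.
From mathcomp Require Import all_boot all_order all_algebra.
From mathcomp Require Import reals exp.
From mathcomp Require Import complex.
From mathcomp Require Import fingroup perm.

Set Implicit Arguments.
Unset Strict Implicit.
Unset Printing Implicit Defensive.
Import Order.TTheory GRing.Theory Num.Theory.
Local Open Scope ring_scope.

Section SetFunctionInformation.
Variables (T : finType) (V : zmodType) (H : {set T} -> V).

Definition multi_info_of m (B : 'I_m -> {set T}) : V :=
  \sum_(j < m) H (B j) - H (\bigcup_(j < m) B j).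

Definition cmi_of (A B Cs : {set T}) : V :=
  H (A :|: Cs) + H (B :|: Cs) - H Cs - H (A :|: B :|: Cs).

End SetFunctionInformation.

Lemma multi_infoE (R : realType) (K : finType) (d : K -> nat) (rho : op R d)
    m (B : 'I_m -> {set K}) :
  multi_info rho B = multi_info_of (Hs rho) B.
Proof. by []. Qed.

Lemma cmiE (R : realType) (K : finType) (d : K -> nat) (rho : op R d)
    (A B Cs : {set K}) :
  cmi rho A B Cs = cmi_of (Hs rho) A B Cs.
Proof. by []. Qed.

Section ChainRule.
Variables (l : nat) (f : 'I_l -> 'I_l) (f_inj : injective f).

Local Notation g := (invF f_inj).

Lemma mem_sysA_prefix k x b :
  ((x, b) \in [set sysA (f j) | j : 'I_l & (j < k)%N]) = ~~ b && (g x < k)%N.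
Proof.
apply/imsetP/andP => [[j jk [-> ->]] | [nb gxk]].
  by rewrite invF_f; move: jk; rewrite inE.
exists (g x); first by rewrite inE.
by rewrite /sysA f_invF; case: b nb.
Qed.

Lemma mem_sysA'_others i x b :
  ((x, b) \in [set sysA' j | j : 'I_l & j != i]) = b && (x != i).
Proof.
apply/imsetP/andP => [[j ji [-> ->]] | [xb xi]]; first by move: ji; rewrite inE.
by exists x; [rewrite inE | case: b xb].
Qed.

Lemma mem_bigcup_sysA' x b : ((x, b) \in \bigcup_(j < l) [set sysA' j]) = b.
Proof.
apply/bigcupP/idP => [[j _] | xb]; first by rewrite inE => /eqP [_ ->].
by exists x => //; rewrite inE /sysA' xb.
Qed.

Lemma mem_bigcup_sysA_sysA' x b :
  (x, b) \in \bigcup_(j < l) [set sysA j; sysA' j].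
Proof. by apply/bigcupP; exists x => //; rewrite !inE; case: b; rewrite eqxx ?orbT. Qed.

Definition chain_set k : {set 'I_l * bool} :=
  [set sysA (f j) | j : 'I_l & (j < k)%N] :|: \bigcup_(j < l) [set sysA' j].

Lemma chain_set0 : chain_set 0 = \bigcup_(j < l) [set sysA' j].
Proof. by apply/setP => -[x b]; rewrite !inE mem_sysA_prefix mem_bigcup_sysA' andbF. Qed.

Lemma chain_set_last : chain_set l = \bigcup_(j < l) [set sysA j; sysA' j].
Proof.
apply/setP => -[x b].
by rewrite !inE mem_sysA_prefix mem_bigcup_sysA' mem_bigcup_sysA_sysA' ltn_ord; case: b.
Qed.

Lemma chain_set_cond (i : 'I_l) :
  [set sysA (f j) | j : 'I_l & (j < i)%N] :|: [set sysA' j | j : 'I_l & j != f i]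
    :|: [set sysA' (f i)] = chain_set i.
Proof.
apply/setP => -[x b].
rewrite !inE mem_sysA_prefix mem_sysA'_others mem_bigcup_sysA' /sysA' xpair_eqE.
by case: b; case: (x == f i); rewrite /= ?orbT ?orbF.
Qed.

Lemma chain_setS (i : 'I_l) :
  [set sysA (f i)] :|: ([set sysA (f j) | j : 'I_l & (j < i)%N]
    :|: [set sysA' j | j : 'I_l & j != f i]) :|: [set sysA' (f i)]
  = chain_set i.+1.
Proof.
apply/setP => -[x b].
rewrite !inE !mem_sysA_prefix mem_sysA'_others mem_bigcup_sysA'.
case: b; rewrite /= -!pair_eqE /= ?andbT ?andbF ?orbF; first by case: (x == f i).
have -> : (x == f i) = (g x == i).
  by apply/eqP/eqP => [-> | <-]; rewrite ?invF_f ?f_invF.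
by rewrite ltnS (leq_eqVlt (g x)).
Qed.

Variables (V : zmodType) (H : {set 'I_l * bool} -> V).

Lemma cmi_of_chain_step (i : 'I_l) :
  cmi_of H [set sysA (f i)]
    ([set sysA (f j) | j : 'I_l & (j < i)%N] :|: [set sysA' j | j : 'I_l & j != f i])
    [set sysA' (f i)]
  = H [set sysA (f i); sysA' (f i)] - H [set sysA' (f i)]
    + (H (chain_set i) - H (chain_set i.+1)).
Proof.
rewrite /cmi_of chain_set_cond chain_setS [RHS]addrA.
by congr (_ - _); rewrite addrAC.
Qed.

Lemma multi_info_of_chain_rule :
  multi_info_of H (fun j => [set sysA j; sysA' j])
  - multi_info_of H (fun j => [set sysA' j])
  = \sum_(i < l)
      cmi_of H [set sysA (f i)]
        ([set sysA (f j) | j : 'I_l & (j < i)%N] :|: [set sysA' j | j : 'I_l & j != f i])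
        [set sysA' (f i)].
Proof.
under eq_bigr do rewrite cmi_of_chain_step.
rewrite big_split /= sumrB.
rewrite -(big_mkord xpredT (fun i => H (chain_set i) - H (chain_set i.+1))).
rewrite (telescope_sumr_eq (fun k => - H (chain_set k))) => [|//|k _]; last first.
  by rewrite opprK addrC.
rewrite chain_set0 chain_set_last.
have sum_reindex (F : 'I_l -> V) : \sum_i F (f i) = \sum_i F i.
  by rewrite [RHS](reindex_inj f_inj).
rewrite (sum_reindex (fun i => H [set sysA i; sysA' i])).
rewrite (sum_reindex (fun i => H [set sysA' i])) /multi_info_of.
by rewrite opprK opprB [in LHS](addrC (H _)) addrACA.
Qed.

End ChainRule.

Theorem lemma1 (R : realType) (l : nat) (d : 'I_l * bool -> nat)
    (rho : op R d) :
  (1 <= l)%N -> density rho ->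
  (multi_info rho (fun j : 'I_l => [set sysA j; sysA' j])
     - multi_info rho (fun j : 'I_l => [set sysA' j])
   = \sum_(i < l)
       cmi rho [set sysA i]
         ([set sysA j | j : 'I_l & (j < i)%N] :|: [set sysA' j | j : 'I_l & j != i])
         [set sysA' i])
  /\
  (forall pi : 'S_l,
     multi_info rho (fun j : 'I_l => [set sysA j; sysA' j])
       - multi_info rho (fun j : 'I_l => [set sysA' j])
     = \sum_(i < l)
         cmi rho [set sysA (pi i)]
           ([set sysA (pi j) | j : 'I_l & (j < i)%N]
              :|: [set sysA' j | j : 'I_l & j != pi i])
           [set sysA' (pi i)]).
Proof.
move=> _ _; split.
  under eq_bigr do rewrite cmiE.
  by rewrite !multi_infoE; exact: (multi_info_of_chain_rule (@inj_id 'I_l) (Hs rho)).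
move=> pi; under eq_bigr do rewrite cmiE.
by rewrite !multi_infoE; exact: (multi_info_of_chain_rule (@perm_inj _ pi) (Hs rho)).
Qed.
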